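(* Let $n\ge 2$, $\rho^*\ge0$, $s>0$, and $k_\rho,k_z,k_\phi>0$. Consider the closed-loop system, for $i=1,\dots,n$, $$\dot\rho_i=k_\rho(\rho^*-\rho_i),\qquad \dot\phi_i=\frac{\Delta_i}{s}+k_\phi(\bar\phi_i-\phi_i),\qquad \dot z_i=-k_z z_i,$$ with $\bar\phi_i$ and $\Delta_i$ as defined in the context. Then for every initial condition, as $t\to\infty$, exponentially: $\rho_i\to\rho^*$, $\phi_i-\bar\phi_i\to0$, $\dot\phi_i\to \frac{2\pi}{ns}$, and $z_i\to0$, for all $i$.
   Context: There are $n$ robots with cylindrical coordinates $(\rho_i,\phi_i,z_i)$ relative to a target frame (radius, phase, height), whose dynamics after a feedback transformation are $\dot\rho_i,\dot\phi_i,\dot z_i$ equal to free inputs. The phases $\phi_i(t)$ are treated as real-valued (not reduced modulo $2\pi$), robots indexed in counterclockwise phase order at the initial time. Phase averages: $\bar\phi_1=\frac{\phi_2+\phi_n-2\pi}{2}$, $\bar\phi_i=\frac{\phi_{i+1}+\phi_{i-1}}{2}$ for $2\le i\le n-1$, $\bar\phi_n=\frac{\phi_1+2\pi+\phi_{n-1}}{2}$. Phase half-differences: $\Delta_1=\frac{\phi_2-\phi_n+2\pi}{2}$, $\Delta_i=\frac{\phi_{i+1}-\phi_{i-1}}{2}$ for $2\le i\le n-1$, $\Delta_n=\frac{\phi_1+2\pi-\phi_{n-1}}{2}$. *)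

From Stdlib Require Export Reals.
Open Scope R_scope.

(* Robots indexed 0..n-1 (paper's 1..n shifted by one); phases are real-valued. *)

Definition phibar (n : nat) (phi : nat -> R -> R) (i : nat) (t : R) : R :=
  if Nat.eqb i 0 then (phi 1%nat t + phi (n - 1)%nat t - 2 * PI) / 2
  else if Nat.eqb i (n - 1) then (phi 0%nat t + 2 * PI + phi (n - 2)%nat t) / 2
  else (phi (i + 1)%nat t + phi (i - 1)%nat t) / 2.

Definition phiDelta (n : nat) (phi : nat -> R -> R) (i : nat) (t : R) : R :=
  if Nat.eqb i 0 then (phi 1%nat t - phi (n - 1)%nat t + 2 * PI) / 2
  else if Nat.eqb i (n - 1) then (phi 0%nat t + 2 * PI - phi (n - 2)%nat t) / 2
  else (phi (i + 1)%nat t - phi (i - 1)%nat t) / 2.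

(* The radial and vertical channels are decoupled scalar equations
   x' = -a x, and the phase channel is handled through the phase gaps
   g_i = phi_{i+1} - phi_i (+ 2 PI across the wrap-around) minus their
   equilibrium value 2 PI / n.  Along solutions the gaps obey a closed
   linear system on the cycle, they always sum to zero, and both the phase
   averaging error and the phase velocity error are linear in g_i, g_{i-1}. *)

From Stdlib Require Import Reals Lra Lia FunctionalExtensionality.
Open Scope R_scope.

Fixpoint rsum (f : nat -> R) (k : nat) : R :=
  match k with O => 0 | S k => rsum f k + f k end.

Lemma rsum_ext f g k :
  (forall i, (i < k)%nat -> f i = g i) -> rsum f k = rsum g k.
Proof.
  induction k as [|k IH]; intros H; simpl; [reflexivity|].
  rewrite IH, H by (try intros; try apply H; lia). reflexivity.
Qed.

Lemma rsum_le f g k :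
  (forall i, (i < k)%nat -> f i <= g i) -> rsum f k <= rsum g k.
Proof.
  induction k as [|k IH]; intros H; simpl; [lra|].
  assert (rsum f k <= rsum g k) by (apply IH; intros; apply H; lia).
  assert (f k <= g k) by (apply H; lia). lra.
Qed.

Lemma rsum_plus f g k : rsum (fun i => f i + g i) k = rsum f k + rsum g k.
Proof. induction k; simpl; lra. Qed.

Lemma rsum_scal a f k : rsum (fun i => a * f i) k = a * rsum f k.
Proof. induction k as [|k IH]; simpl; [ring|rewrite IH; ring]. Qed.

Lemma rsum_const c k : rsum (fun _ => c) k = INR k * c.
Proof. induction k as [|k IH]; simpl rsum; [simpl; ring|rewrite IH, S_INR; ring]. Qed.

Lemma rsum_nonneg f k : (forall i, (i < k)%nat -> 0 <= f i) -> 0 <= rsum f k.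
Proof. intros H. rewrite <- (Rmult_0_r (INR k)), <- rsum_const. now apply rsum_le. Qed.

Lemma rsum_mono f k k' :
  (forall i, (i < k')%nat -> 0 <= f i) -> (k <= k')%nat -> rsum f k <= rsum f k'.
Proof.
  intros H Hk. induction Hk as [|m Hk IH]; simpl; [lra|].
  assert (0 <= f m) by (apply H; lia).
  assert (rsum f k <= rsum f m) by (apply IH; intros; apply H; lia). lra.
Qed.

Lemma rsum_term f k j :
  (forall i, (i < k)%nat -> 0 <= f i) -> (j < k)%nat -> f j <= rsum f k.
Proof.
  intros H Hj. apply Rle_trans with (rsum f (S j)).
  - simpl. assert (0 <= rsum f j) by (apply rsum_nonneg; intros; apply H; lia). lra.
  - apply rsum_mono; auto.
Qed.

Lemma rsum_abs f k : Rabs (rsum f k) <= rsum (fun i => Rabs (f i)) k.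
Proof.
  induction k; simpl; [rewrite Rabs_R0; lra|].
  eapply Rle_trans; [apply Rabs_triang|lra].
Qed.

Lemma rsum_shift f k : rsum f (S k) = f 0%nat + rsum (fun i => f (S i)) k.
Proof. induction k as [|k IH]; [simpl; ring|]. change (rsum f (S (S k))) with (rsum f (S k) + f (S k)). rewrite IH. simpl. ring. Qed.

Definition next (n i : nat) : nat := if Nat.eqb i (n - 1) then 0%nat else S i.
Definition prev (n i : nat) : nat := if Nat.eqb i 0 then (n - 1)%nat else (i - 1)%nat.

Lemma next_lt n i : (i < n)%nat -> (next n i < n)%nat.
Proof. unfold next; destruct (Nat.eqb_spec i (n - 1)); lia. Qed.

Lemma prev_lt n i : (i < n)%nat -> (prev n i < n)%nat.
Proof. unfold prev; destruct (Nat.eqb_spec i 0); lia. Qed.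

Lemma prev_next n i : (i < n)%nat -> prev n (next n i) = i.
Proof. unfold next, prev; destruct (Nat.eqb_spec i (n - 1)); simpl; lia. Qed.

Lemma rsum_next F n : (1 <= n)%nat -> rsum (fun i => F (next n i)) n = rsum F n.
Proof.
  intros Hn. destruct n as [|m]; [lia|].
  simpl rsum at 1. rewrite rsum_shift, (rsum_ext _ (fun i => F (S i))).
  - unfold next. replace (S m - 1)%nat with m by lia. rewrite Nat.eqb_refl. ring.
  - intros i Hi. unfold next. destruct (Nat.eqb_spec i (S m - 1)); [lia|reflexivity].
Qed.

Lemma rsum_telescope F n : (1 <= n)%nat -> rsum (fun i => F (next n i) - F i) n = 0.
Proof.
  intros Hn. rewrite (rsum_ext _ (fun i => F (next n i) + (-1) * F i)) by (intros; ring).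
  rewrite rsum_plus, rsum_scal, rsum_next by assumption. ring.
Qed.

Section CyclicPoincare.

Variables (n : nat) (h : nat -> R).
Hypothesis (Hn : (1 <= n)%nat).

Let d (i : nat) : R := h (next n i) - h i.
Let D : R := rsum (fun i => Rabs (d i)) n.
Let M : R := rsum (fun i => d i ^ 2) n.

Lemma value_as_prefix i : (i < n)%nat -> h i = h 0%nat + rsum d i.
Proof.
  induction i as [|i IH]; intros Hi; simpl; [ring|].
  assert (Hd : d i = h (S i) - h i)
    by (unfold d, next; destruct (Nat.eqb_spec i (n - 1)); [lia|reflexivity]).
  rewrite Hd. specialize (IH ltac:(lia)). lra.
Qed.

Lemma zero_sum_bound : rsum h n = 0 -> forall i, (i < n)%nat -> Rabs (h i) <= 2 * D.
Proof.
  intros Hsum.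
  assert (Hpre : forall i, (i < n)%nat -> Rabs (rsum d i) <= D).
  { intros i Hi. eapply Rle_trans; [apply rsum_abs|].
    apply rsum_mono; [intros; apply Rabs_pos|lia]. }
  assert (Hn' : 0 < INR n) by (apply lt_0_INR; lia).
  assert (Hh0 : Rabs (h 0%nat) <= D).
  { rewrite (rsum_ext h (fun i => h 0%nat + rsum d i)), rsum_plus, rsum_const in Hsum
      by exact value_as_prefix.
    assert (Rabs (rsum (rsum d) n) <= INR n * D).
    { eapply Rle_trans; [apply rsum_abs|]. rewrite <- rsum_const.
      apply rsum_le; intros; apply Hpre; lia. }
    replace (h 0%nat) with (- rsum (rsum d) n / INR n) by (field_simplify_eq; lra).
    unfold Rdiv. rewrite Rabs_mult, Rabs_Ropp, Rabs_inv, (Rabs_pos_eq (INR n)) by lra.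
    apply Rmult_le_reg_l with (INR n); [lra|]. field_simplify; lra. }
  intros i Hi. rewrite value_as_prefix by assumption.
  eapply Rle_trans; [apply Rabs_triang|]. specialize (Hpre i Hi). lra.
Qed.

(* Each difference is bounded by the root of the sum of squares, so D <= n sqrt M. *)
Lemma variation_bound : D <= INR n * sqrt M.
Proof.
  unfold D. rewrite <- rsum_const. apply rsum_le. intros k Hk.
  rewrite <- sqrt_Rsqr_abs. apply sqrt_le_1_alt. unfold Rsqr.
  replace (d k * d k) with (d k ^ 2) by ring.
  apply (rsum_term (fun i => d i ^ 2)); auto. intros; apply pow2_ge_0.
Qed.

Lemma cyclic_poincare :
  rsum h n = 0 -> rsum (fun i => h i ^ 2) n <= 4 * INR n ^ 3 * M.
Proof.
  intros Hsum.
  assert (HM : 0 <= M) by (apply rsum_nonneg; intros; apply pow2_ge_0).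
  assert (Hpoint : forall i, (i < n)%nat -> h i ^ 2 <= 4 * INR n ^ 2 * M).
  { intros i Hi. rewrite <- (pow2_abs (h i)).
    replace (4 * INR n ^ 2 * M) with ((2 * INR n * sqrt M) ^ 2)
      by (rewrite Rpow_mult_distr, pow2_sqrt by exact HM; ring).
    apply pow_incr. split; [apply Rabs_pos|].
    pose proof (zero_sum_bound Hsum i Hi). pose proof variation_bound. lra. }
  eapply Rle_trans; [apply rsum_le; exact Hpoint|]. rewrite rsum_const. lra.
Qed.

End CyclicPoincare.

Lemma deriv_ext f g t l l' :
  derivable_pt_lim f t l -> (forall x, f x = g x) -> l = l' -> derivable_pt_lim g t l'.
Proof. intros H E El. replace g with f by (apply functional_extensionality; auto). now subst. Qed.

Lemma deriv_sq f t l :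
  derivable_pt_lim f t l -> derivable_pt_lim (fun x => f x ^ 2) t (2 * f t * l).
Proof.
  intros H. eapply deriv_ext; [apply (derivable_pt_lim_mult f f t l l H H)|intros; unfold mult_fct; ring|ring].
Qed.

Lemma deriv_exp_lin a t : derivable_pt_lim (fun x => exp (a * x)) t (a * exp (a * t)).
Proof.
  eapply deriv_ext.
  - apply (derivable_pt_lim_comp (fun x => a * x) exp t a).
    + eapply deriv_ext; [apply (derivable_pt_lim_scal id a t 1), derivable_pt_lim_id|reflexivity|ring].
    + apply derivable_pt_lim_exp.
  - reflexivity.
  - ring.
Qed.

Lemma deriv_rsum (F : nat -> R -> R) F' k t :
  (forall i, (i < k)%nat -> derivable_pt_lim (F i) t (F' i)) ->
  derivable_pt_lim (fun x => rsum (fun i => F i x) k) t (rsum F' k).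
Proof.
  induction k as [|k IH]; intros H; simpl.
  - apply derivable_pt_lim_const.
  - apply derivable_pt_lim_plus; [apply IH; intros; apply H; lia|apply H; lia].
Qed.

(* Mean value theorem: a nonpositive derivative on [0, oo) makes U nonincreasing there. *)
Lemma nonincreasing_from_0 U U' :
  (forall t, derivable_pt_lim U t (U' t)) -> (forall t, 0 <= t -> U' t <= 0) ->
  forall t, 0 <= t -> U t <= U 0.
Proof.
  intros HD HN t Ht. destruct (Req_dec t 0) as [->|Ht0]; [lra|].
  destruct (MVT_cor2 U U' 0 t) as [c [Hc Hc']]; [lra|intros; apply HD|].
  assert (U' c <= 0) by (apply HN; lra). nra.
Qed.

Lemma lyapunov_decay W W' c :
  (forall t, derivable_pt_lim W t (W' t)) -> (forall t, 0 <= t -> W' t <= - c * W t) ->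
  forall t, 0 <= t -> W t <= W 0 * exp (- c * t).
Proof.
  intros HD HN t Ht.
  assert (Hmon : W t * exp (c * t) <= W 0 * exp (c * 0)).
  { apply (nonincreasing_from_0 (fun u => W u * exp (c * u))
             (fun u => (W' u + c * W u) * exp (c * u))); [|intros u Hu; cbv beta|exact Ht].
    - intros u. eapply deriv_ext;
        [apply (derivable_pt_lim_mult _ _ u _ _ (HD u) (deriv_exp_lin c u))|reflexivity|ring].
    - pose proof (exp_pos (c * u)). specialize (HN u Hu). nra. }
  rewrite Rmult_0_r, exp_0, Rmult_1_r in Hmon.
  replace (W t) with (W t * exp (c * t) * exp (- c * t))
    by (rewrite Rmult_assoc, <- exp_plus; replace (c * t + - c * t) with 0 by ring;
        rewrite exp_0; ring).
  apply Rmult_le_compat_r; [left; apply exp_pos|exact Hmon].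
Qed.

Lemma abs_decay_of_sq x W0 lam t :
  0 <= W0 -> x ^ 2 <= W0 * exp (- (2 * lam) * t) -> Rabs x <= sqrt W0 * exp (- lam * t).
Proof.
  intros HW Hx. apply Rsqr_incr_0_var; [|apply Rmult_le_pos; [apply sqrt_pos|left; apply exp_pos]].
  rewrite <- Rsqr_abs. unfold Rsqr.
  replace (sqrt W0 * exp (- lam * t) * (sqrt W0 * exp (- lam * t)))
    with ((sqrt W0 * sqrt W0) * (exp (- lam * t) * exp (- lam * t))) by ring.
  rewrite sqrt_sqrt, <- exp_plus by exact HW.
  replace (- lam * t + - lam * t) with (- (2 * lam) * t) by ring. simpl in Hx. lra.
Qed.

Lemma scalar_decay x x_eq a :
  (forall t, derivable_pt_lim x t (- a * (x t - x_eq))) ->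
  forall t, 0 <= t -> Rabs (x t - x_eq) <= Rabs (x 0 - x_eq) * exp (- a * t).
Proof.
  intros HD t Ht. rewrite <- (sqrt_Rsqr_abs (x 0 - x_eq)).
  apply abs_decay_of_sq; [apply Rle_0_sqr|].
  replace (Rsqr (x 0 - x_eq)) with ((x 0 - x_eq) ^ 2) by (unfold Rsqr; ring).
  apply (lyapunov_decay (fun u => (x u - x_eq) ^ 2)
           (fun u => 2 * (x u - x_eq) * (- a * (x u - x_eq)))); [|intros; lra|exact Ht].
  intros u. apply (deriv_sq (fun v => x v - x_eq)). eapply deriv_ext;
    [apply (derivable_pt_lim_minus _ _ u _ _ (HD u) (derivable_pt_lim_const x_eq u))|reflexivity|ring].
Qed.

Lemma exp_rate_le a b t : 0 <= t -> b <= a -> exp (- a * t) <= exp (- b * t).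
Proof.
  intros Ht Hab. destruct (Req_dec (a * t) (b * t)) as [E|E].
  - replace (- a * t) with (- b * t) by lra. lra.
  - left. apply exp_increasing. nra.
Qed.

Lemma abs_lincomb_le a b x y E :
  Rabs x <= E -> Rabs y <= E -> Rabs (a * x + b * y) <= (Rabs a + Rabs b) * E.
Proof.
  intros Hx Hy. eapply Rle_trans; [apply Rabs_triang|]. rewrite !Rabs_mult.
  pose proof (Rmult_le_compat_l _ _ _ (Rabs_pos a) Hx).
  pose proof (Rmult_le_compat_l _ _ _ (Rabs_pos b) Hy). lra.
Qed.

Definition gap (n : nat) (phi : nat -> R -> R) (i : nat) (t : R) : R :=
  phi (next n i) t - phi i t + (if Nat.eqb i (n - 1) then 2 * PI else 0) - 2 * PI / INR n.

Definition disagreement (n : nat) (phi : nat -> R -> R) (t : R) : R :=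
  rsum (fun j => gap n phi j t ^ 2) n.

Definition gap_rate (n : nat) (k_phi : R) : R := k_phi / (8 * INR n ^ 3).

Section PhaseGaps.

Variables (n : nat) (phi : nat -> R -> R).
Hypothesis Hn : (2 <= n)%nat.

Let g := gap n phi.

Lemma phibar_gap i t : (i < n)%nat -> phibar n phi i t - phi i t = (g i t - g (prev n i) t) / 2.
Proof.
  intros Hi. unfold g, gap, phibar, next, prev. set (m := 2 * PI / INR n).
  repeat match goal with |- context [Nat.eqb ?a ?b] => destruct (Nat.eqb_spec a b) end;
    try lia; subst; try (replace (S (i - 1)) with i by lia);
    try (replace (i + 1)%nat with (S i) by lia); try (replace (n - 2)%nat with (n - 1 - 1)%nat by lia);
    try (replace (S (n - 1 - 1)) with (n - 1)%nat by lia); lra.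
Qed.

Lemma phiDelta_gap i t :
  (i < n)%nat -> phiDelta n phi i t = (g i t + g (prev n i) t) / 2 + 2 * PI / INR n.
Proof.
  intros Hi. unfold g, gap, phiDelta, next, prev. set (m := 2 * PI / INR n).
  repeat match goal with |- context [Nat.eqb ?a ?b] => destruct (Nat.eqb_spec a b) end;
    try lia; subst; try (replace (S (i - 1)) with i by lia);
    try (replace (i + 1)%nat with (S i) by lia); try (replace (n - 2)%nat with (n - 1 - 1)%nat by lia);
    try (replace (S (n - 1 - 1)) with (n - 1)%nat by lia); lra.
Qed.

(* The gaps always sum to zero: the phases wind exactly once around the circle. *)
Lemma gap_sum t : rsum (fun i => g i t) n = 0.
Proof.
  assert (Hn' : 0 < INR n) by (apply lt_0_INR; lia).
  unfold g, gap.
  rewrite (rsum_ext _ (fun i => (phi (next n i) t - phi i t)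
              + ((if Nat.eqb i (n - 1) then 2 * PI else 0) + - (2 * PI / INR n)))) by (intros; ring).
  rewrite !rsum_plus, (rsum_telescope (fun j => phi j t)), rsum_const by lia.
  assert (Hwind : rsum (fun i => if Nat.eqb i (n - 1) then 2 * PI else 0) n = 2 * PI).
  { destruct n as [|k]; [lia|]. simpl rsum at 1. replace (k - 0)%nat with k by lia.
    rewrite Nat.eqb_refl, (rsum_ext _ (fun _ => 0)), rsum_const; [ring|].
    intros i Hi. destruct (Nat.eqb_spec i k); [lia|reflexivity]. }
  rewrite Hwind. field. lra.
Qed.

Variables (s k_phi : R).
Hypothesis Hs : 0 < s.
Hypothesis Hphi : forall i t, (i < n)%nat ->
  derivable_pt_lim (phi i) t (phiDelta n phi i t / s + k_phi * (phibar n phi i t - phi i t)).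

Lemma phi_velocity i t : (i < n)%nat ->
  derivable_pt_lim (phi i) t
    (2 * PI / (INR n * s) + (/ (2 * s) + k_phi / 2) * g i t + (/ (2 * s) - k_phi / 2) * g (prev n i) t).
Proof.
  intros Hi. assert (0 < INR n) by (apply lt_0_INR; lia).
  eapply deriv_ext; [apply (Hphi i t Hi)|reflexivity|].
  rewrite phibar_gap, phiDelta_gap by exact Hi. field. lra.
Qed.

(* The gaps obey a closed linear system: advection plus discrete diffusion on the cycle. *)
Lemma gap_derivative i t : (i < n)%nat ->
  derivable_pt_lim (g i) t
    ((g (next n i) t - g (prev n i) t) / (2 * s)
     + k_phi * (g (next n i) t - 2 * g i t + g (prev n i) t) / 2).
Proof.
  intros Hi. unfold g at 1, gap.
  eapply deriv_ext.
  - apply derivable_pt_lim_minus; [apply derivable_pt_lim_plus|apply derivable_pt_lim_const].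
    + apply derivable_pt_lim_minus; [apply (phi_velocity (next n i) t (next_lt n i Hi))|apply (phi_velocity i t Hi)].
    + apply derivable_pt_lim_const.
  - reflexivity.
  - assert (0 < INR n) by (apply lt_0_INR; lia).
    rewrite prev_next by exact Hi. field. lra.
Qed.

(* The disagreement V = sum g_i^2 dissipates exactly k_phi sum (g_{i+1} - g_i)^2:
   the advection terms telescope around the cycle. *)
Lemma disagreement_derivative t :
  derivable_pt_lim (disagreement n phi) t
    (- k_phi * rsum (fun i => (g (next n i) t - g i t) ^ 2) n).
Proof.
  unfold disagreement. fold g.
  eapply deriv_ext; [apply deriv_rsum; intros i Hi; apply deriv_sq, (gap_derivative i t Hi)|reflexivity|].
  set (F := fun j => g j t * g (prev n j) t). set (Q := fun j => g j t ^ 2).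
  rewrite (rsum_ext _ (fun i => (/ s - k_phi) * (F (next n i) - F i)
                                + (k_phi * (Q (next n i) - Q i) + (- k_phi) * (g (next n i) t - g i t) ^ 2))).
  - rewrite !rsum_plus, !rsum_scal, !rsum_telescope by lia. ring.
  - intros i Hi. unfold F, Q. rewrite (prev_next n i Hi). field. lra.
Qed.

Hypothesis Hk : 0 < k_phi.

(* With the cyclic Poincare inequality the dissipation controls V itself,
   so V decays at rate k_phi / (4 n^3) = 2 * gap_rate. *)
Lemma disagreement_decay t : 0 <= t ->
  disagreement n phi t <= disagreement n phi 0 * exp (- (2 * gap_rate n k_phi) * t).
Proof.
  intros Ht. assert (Hn1 : 0 < INR n) by (apply lt_0_INR; lia).
  assert (Hn3 : 0 < INR n ^ 3) by (apply pow_lt, Hn1).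
  replace (2 * gap_rate n k_phi) with (k_phi / (4 * INR n ^ 3)) by (unfold gap_rate; field; lra).
  apply (lyapunov_decay _ _ _ disagreement_derivative); [|exact Ht].
  intros u _.
  pose proof (cyclic_poincare n (fun j => g j u) ltac:(lia) (gap_sum u)) as HP.
  set (M := rsum (fun j => (g (next n j) u - g j u) ^ 2) n) in *.
  assert (Hc : 0 <= k_phi / (4 * INR n ^ 3)) by (apply Rlt_le, Rdiv_lt_0_compat; lra).
  apply (Rmult_le_compat_l _ _ _ Hc) in HP.
  replace (k_phi / (4 * INR n ^ 3) * (4 * INR n ^ 3 * M)) with (k_phi * M) in HP by (field; lra).
  unfold disagreement. fold g. lra.
Qed.

Lemma gap_decay i t : (i < n)%nat -> 0 <= t ->
  Rabs (g i t) <= sqrt (disagreement n phi 0) * exp (- gap_rate n k_phi * t).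
Proof.
  intros Hi Ht. apply abs_decay_of_sq; [apply rsum_nonneg; intros; apply pow2_ge_0|].
  eapply Rle_trans; [|exact (disagreement_decay t Ht)].
  apply (rsum_term (fun j => g j t ^ 2)); [intros; apply pow2_ge_0|exact Hi].
Qed.

Lemma averaging_error_decay i t : (i < n)%nat -> 0 <= t ->
  Rabs (phi i t - phibar n phi i t) <= sqrt (disagreement n phi 0) * exp (- gap_rate n k_phi * t).
Proof.
  intros Hi Ht. rewrite <- Rabs_Ropp, Ropp_minus_distr, phibar_gap by exact Hi.
  replace ((g i t - g (prev n i) t) / 2) with (/ 2 * g i t + - / 2 * g (prev n i) t) by field.
  eapply Rle_trans;
    [apply abs_lincomb_le; [apply (gap_decay i t Hi Ht)|apply (gap_decay _ t (prev_lt n i Hi) Ht)]|].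
  rewrite Rabs_Ropp, Rabs_pos_eq by lra. lra.
Qed.

Lemma velocity_gain_bound :
  Rabs (/ (2 * s) + k_phi / 2) + Rabs (/ (2 * s) - k_phi / 2) <= / s + k_phi.
Proof.
  assert (0 < / s) by (apply Rinv_0_lt_compat; lra).
  replace (/ (2 * s)) with (/ s / 2) by (field; lra).
  rewrite (Rabs_pos_eq (/ s / 2 + k_phi / 2)) by lra.
  assert (Rabs (/ s / 2 - k_phi / 2) <= / s / 2 + k_phi / 2) by (apply Rabs_le; lra). lra.
Qed.

Lemma velocity_error_decay i t d : (i < n)%nat -> 0 <= t -> derivable_pt_lim (phi i) t d ->
  Rabs (d - 2 * PI / (INR n * s))
    <= (/ s + k_phi) * sqrt (disagreement n phi 0) * exp (- gap_rate n k_phi * t).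
Proof.
  intros Hi Ht Hd. rewrite (uniqueness_limite _ _ _ _ Hd (phi_velocity i t Hi)).
  replace (2 * PI / (INR n * s) + (/ (2 * s) + k_phi / 2) * g i t
           + (/ (2 * s) - k_phi / 2) * g (prev n i) t - 2 * PI / (INR n * s))
    with ((/ (2 * s) + k_phi / 2) * g i t + (/ (2 * s) - k_phi / 2) * g (prev n i) t) by ring.
  eapply Rle_trans;
    [apply abs_lincomb_le; [apply (gap_decay i t Hi Ht)|apply (gap_decay _ t (prev_lt n i Hi) Ht)]|].
  rewrite Rmult_assoc. apply Rmult_le_compat_r; [|exact velocity_gain_bound].
  apply Rmult_le_pos; [apply sqrt_pos|left; apply exp_pos].
Qed.

End PhaseGaps.

Lemma decay_weaken x A a C lam t :
  0 <= t -> 0 <= A -> A <= C -> lam <= a ->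
  x <= A * exp (- a * t) -> x <= C * exp (- lam * t).
Proof.
  intros Ht HA HAC Hlam Hx. eapply Rle_trans; [exact Hx|].
  apply Rmult_le_compat; [exact HA|left; apply exp_pos|exact HAC|apply exp_rate_le; assumption].
Qed.

Theorem proposition2 (n : nat) (rho_star s k_rho k_z k_phi : R)
  (rho phi z : nat -> R -> R)
  (Hn : (2 <= n)%nat) (Hrs : 0 <= rho_star) (Hs : 0 < s)
  (Hkr : 0 < k_rho) (Hkz : 0 < k_z) (Hkp : 0 < k_phi)
  (Hord : forall i, (i + 1 < n)%nat -> phi i 0 <= phi (i + 1)%nat 0)
  (Hwrap : phi (n - 1)%nat 0 <= phi 0%nat 0 + 2 * PI)
  (Hrho : forall i t, (i < n)%nat ->
     derivable_pt_lim (rho i) t (k_rho * (rho_star - rho i t)))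
  (Hphi : forall i t, (i < n)%nat ->
     derivable_pt_lim (phi i) t
       (phiDelta n phi i t / s + k_phi * (phibar n phi i t - phi i t)))
  (Hz : forall i t, (i < n)%nat ->
     derivable_pt_lim (z i) t (- k_z * z i t)) :
  exists C lam : R, 0 < lam /\
    forall i t, (i < n)%nat -> 0 <= t ->
      Rabs (rho i t - rho_star) <= C * exp (- lam * t) /\
      Rabs (phi i t - phibar n phi i t) <= C * exp (- lam * t) /\
      (forall d, derivable_pt_lim (phi i) t d ->
         Rabs (d - 2 * PI / (INR n * s)) <= C * exp (- lam * t)) /\
      Rabs (z i t) <= C * exp (- lam * t).
Proof.
  set (c := gap_rate n k_phi).
  assert (Hc : 0 < c)
    by (apply Rdiv_lt_0_compat; [lra|]; apply Rmult_lt_0_compat; [lra|]; apply pow_lt, lt_0_INR; lia).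
  set (B := sqrt (disagreement n phi 0)).
  set (K := rsum (fun j => Rabs (rho j 0 - rho_star) + Rabs (z j 0)) n).
  set (lam := Rmin k_rho (Rmin k_z c)).
  assert (Hlam : lam <= k_rho /\ lam <= k_z /\ lam <= c).
  { unfold lam. pose proof (Rmin_l k_rho (Rmin k_z c)). pose proof (Rmin_r k_rho (Rmin k_z c)).
    pose proof (Rmin_l k_z c). pose proof (Rmin_r k_z c). lra. }
  exists (K + (/ s + k_phi + 1) * B), lam.
  split; [unfold lam; repeat apply Rmin_glb_lt; lra|].
  intros i t Hi Ht.
  assert (HB : 0 <= B) by apply sqrt_pos.
  assert (HvB : 0 <= (/ s + k_phi) * B)
    by (apply Rmult_le_pos; [pose proof (Rinv_0_lt_compat s Hs)|]; lra).
  assert (HK : Rabs (rho i 0 - rho_star) + Rabs (z i 0) <= K).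
  { apply (rsum_term (fun j => Rabs (rho j 0 - rho_star) + Rabs (z j 0))); [|exact Hi].
    intros j _. pose proof (Rabs_pos (rho j 0 - rho_star)). pose proof (Rabs_pos (z j 0)). lra. }
  pose proof (Rabs_pos (rho i 0 - rho_star)). pose proof (Rabs_pos (z i 0)).
  split; [|split; [|split]].
  - apply (decay_weaken _ (Rabs (rho i 0 - rho_star)) k_rho); try lra.
    apply scalar_decay; [|exact Ht].
    intros u. eapply deriv_ext; [apply (Hrho i u Hi)|reflexivity|ring].
  - apply (decay_weaken _ B c); try lra.
    exact (averaging_error_decay n phi Hn s k_phi Hs Hphi Hkp i t Hi Ht).
  - intros d Hd. apply (decay_weaken _ ((/ s + k_phi) * B) c); try lra.
    exact (velocity_error_decay n phi Hn s k_phi Hs Hphi Hkp i t d Hi Ht Hd).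
  - apply (decay_weaken _ (Rabs (z i 0)) k_z); try lra.
    rewrite <- (Rminus_0_r (z i t)), <- (Rminus_0_r (z i 0)). apply scalar_decay; [|exact Ht].
    intros u. eapply deriv_ext; [apply (Hz i u Hi)|reflexivity|ring].
Qed.
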